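(* The rules (mix) and (sc$_n$) ($n\ge2$) are $\mathsf{GK(A_m)^r}$-admissible: for all finite multisets $\Gamma,\Delta,\Pi,\Sigma$ of $\mathcal{L}_{A_m}^{\Box}$-formulas, if $\Gamma\Rightarrow\Delta$ and $\Pi\Rightarrow\Sigma$ are $\mathsf{GK(A_m)^r}$-derivable then so is $\Gamma,\Pi\Rightarrow\Sigma,\Delta$; and for every $n\ge2$, if $n\Gamma\Rightarrow n\Delta$ is $\mathsf{GK(A_m)^r}$-derivable then so is $\Gamma\Rightarrow\Delta$.
   Context: $\mathcal{L}_{A_m}^{\Box}$-formulas are built from a countably infinite set of variables using binary $\to$ and unary $\Box$. A sequent $\Gamma\Rightarrow\Delta$ is an ordered pair of finite multisets of formulas; $\Gamma,\Delta$ is multiset union, $n\Gamma$ is $\Gamma$ repeated $n$ times, $n[\varphi]$ is $n$ copies of $\varphi$, $\Box\Gamma=[\Box\varphi:\varphi\in\Gamma]$. The calculus $\mathsf{GK(A_m)^r}$ has the rules: (id) $\Delta\Rightarrow\Delta$ (no premises); ($\to\Rightarrow$) from $\Gamma,\psi\Rightarrow\varphi,\Delta$ infer $\Gamma,\varphi\to\psi\Rightarrow\Delta$; ($\Rightarrow\to$) from $\Gamma,\varphi\Rightarrow\psi,\Delta$ infer $\Gamma\Rightarrow\varphi\to\psi,\Delta$; and for each $k\ge1$, $n\ge0$ the rule ($\Box_{k,n}$): from $\Gamma_0\Rightarrow$ and $\Gamma_i\Rightarrow k[\varphi_i]$ ($i=1,\dots,n$) infer $\Delta,\Box\Gamma\Rightarrow\Box\varphi_1,\dots,\Box\varphi_n,\Delta$,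 where $k\Gamma=\Gamma_0\uplus\Gamma_1\uplus\dots\uplus\Gamma_n$. A derivation is a finite tree of sequents in which each node with its parents is a rule instance. *)

From Stdlib Require Import List Permutation Arith.
Import ListNotations.

Inductive form : Type :=
| Var : nat -> form
| Imp : form -> form -> form
| Box : form -> form.

Fixpoint rep {A : Type} (n : nat) (l : list A) : list A :=
  match n with
  | 0 => []
  | S n' => l ++ rep n' l
  end.

(* Multisets are represented by lists; every rule's conclusion is taken
   up to permutation of antecedent and succedent, so [GKr G D] depends only
   on the multisets underlying G and D. *)
Inductive GKr : list form -> list form -> Prop :=
| GK_id : forall G D X,
    Permutation G X -> Permutation D X -> GKr G D
| GK_impL : forall G D Gm Dl phi psi,
    GKr (Gm ++ [psi]) (phi :: Dl) ->
    Permutation G (Gm ++ [Imp phi psi]) -> Permutation D Dl ->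
    GKr G D
| GK_impR : forall G D Gm Dl phi psi,
    GKr (Gm ++ [phi]) (psi :: Dl) ->
    Permutation G Gm -> Permutation D (Imp phi psi :: Dl) ->
    GKr G D
(* (Box_{k,n}): ps = [(Gamma_1,phi_1); ...; (Gamma_n,phi_n)] *)
| GK_box : forall (k : nat) (G D Dl Gm G0 : list form)
                  (ps : list (list form * form)),
    1 <= k ->
    Permutation (rep k Gm) (G0 ++ concat (map fst ps)) ->
    GKr G0 [] ->
    (forall p, In p ps -> GKr (fst p) (repeat (snd p) k)) ->
    Permutation G (Dl ++ map Box Gm) ->
    Permutation D (map Box (map snd ps) ++ Dl) ->
    GKr G D.

From Stdlib Require Import List Permutation Arith Lia Morphisms.
Import ListNotations.

(* Mix is proved for a finite family of derivable sequents at once, by induction on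
   the largest height of their derivations and, for a fixed height, on their total
   size.  A member whose derivation ends in (id) is dropped, since the conclusion of
   (id) can be added to any derivable sequent; one ending in (->=>) or (=>->) is
   replaced by its premise.  If all members end in box rules (Box_{k_i}), then with k
   the product of the k_i, the k / k_i-fold mix of each premise turns the family into
   a single instance of (Box_k) whose premises are mixes of derivations of smaller
   height.

   Mix makes the implication rules invertible: in the box case the principal
   implication lies in the context of the box rule, i.e. on both sides.  Then (sc_n)
   follows by induction on size.  If Gamma or Delta contains an implication, its n
   copies in nGamma => nDelta are inverted.  Otherwise nGamma => nDelta is the
   conclusion of (id), so Gamma and Delta agree, or of (Box_k): merging the n premises
   for each boxed formula of Delta yields an instance of (Box_{nk}) with conclusion
   Gamma => Delta. *)

Section PermutationSolver.
Context {A : Type}.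
Implicit Types (x y : A) (a b l r R X : list A).

Lemma perm_skip_cons x y l X : Permutation l (x :: X) -> Permutation (y :: l) (x :: y :: X).
Proof. intros H; rewrite H; apply perm_swap. Qed.

Lemma perm_skip_app x b l X : Permutation l (x :: X) -> Permutation (b ++ l) (x :: b ++ X).
Proof. intros H; rewrite H; symmetry; apply Permutation_middle. Qed.

Lemma perm_skip_cons_app a y l X : Permutation l (a ++ X) -> Permutation (y :: l) (a ++ y :: X).
Proof. intros H; rewrite H; apply Permutation_middle. Qed.

Lemma perm_skip_app_app a b l X : Permutation l (a ++ X) -> Permutation (b ++ l) (a ++ b ++ X).
Proof. intros H; rewrite H, !app_assoc; apply Permutation_app_tail, Permutation_app_comm. Qed.

Lemma perm_app_nil a : Permutation a (a ++ []).
Proof. rewrite app_nil_r; reflexivity. Qed.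

Lemma perm_take_cons x r R X : Permutation R (x :: X) -> Permutation r X -> Permutation (x :: r) R.
Proof. intros H1 H2; rewrite H1, H2; reflexivity. Qed.

Lemma perm_take_app a r R X : Permutation R (a ++ X) -> Permutation r X -> Permutation (a ++ r) R.
Proof. intros H1 H2; rewrite H1, H2; reflexivity. Qed.

Lemma perm_take_last a R X : Permutation R (a ++ X) -> Permutation [] X -> Permutation a R.
Proof. intros H1 H2; rewrite H1, <- H2, app_nil_r; reflexivity. Qed.

End PermutationSolver.

(* [perm_find] solves [Permutation R (x :: ?X)] or [Permutation R (a ++ ?X)] by
   locating the element [x], resp. the list [a], in [R]. *)
Ltac perm_find :=
  match goal with
  | |- Permutation (?x :: _) (?x :: _) => apply Permutation_refl
  | |- Permutation (_ :: _) (_ :: _) => apply perm_skip_cons; perm_find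
  | |- Permutation (_ ++ _) (_ :: _) => apply perm_skip_app; perm_find
  | |- Permutation (?a ++ _) (?a ++ _) => apply Permutation_refl
  | |- Permutation ?a (?a ++ _) => apply perm_app_nil
  | |- Permutation (_ :: _) (_ ++ _) => apply perm_skip_cons_app; perm_find
  | |- Permutation (_ ++ _) (_ ++ _) => apply perm_skip_app_app; perm_find
  end.

Ltac perm_match :=
  match goal with
  | |- Permutation ?l ?l => apply Permutation_refl
  | |- Permutation (?x :: ?r) ?R => eapply (perm_take_cons x r R); [perm_find | perm_match]
  | |- Permutation (?a ++ ?r) ?R => eapply (perm_take_app a r R); [perm_find | perm_match]
  | |- Permutation ?a ?R => eapply (perm_take_last a R); [perm_find | perm_match]
  end.

(* Proves [Permutation l r] when [l] and [r] are built by [::] and [++] from the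
   same elements and the same list subterms. *)
Ltac perm := simpl; rewrite <- ?app_assoc, ?app_nil_r; simpl; perm_match.

Section Rep.
Context {A : Type}.
Implicit Types (x : A) (a b l : list A).

#[export] Instance rep_Permutation n : Proper (@Permutation A ==> @Permutation A) (rep n).
Proof.
  intros a b H; induction n as [|n IH]; simpl; [reflexivity | apply Permutation_app; assumption].
Qed.

Lemma rep_app n a b : Permutation (rep n (a ++ b)) (rep n a ++ rep n b).
Proof. induction n as [|n IH]; simpl; [reflexivity | rewrite IH; perm]. Qed.

Lemma rep_cons n x l : Permutation (rep n (x :: l)) (repeat x n ++ rep n l).
Proof. induction n as [|n IH]; simpl; [reflexivity | rewrite IH; perm]. Qed.

Lemma rep_nil n : rep n (@nil A) = [].
Proof. induction n; simpl; auto. Qed.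

Lemma rep_add m n l : rep (m + n) l = rep m l ++ rep n l.
Proof. induction m as [|m IH]; simpl; [reflexivity | rewrite IH, app_assoc; reflexivity]. Qed.

Lemma rep_rep m n l : rep m (rep n l) = rep (m * n) l.
Proof. induction m as [|m IH]; simpl; [reflexivity | rewrite IH, rep_add; reflexivity]. Qed.

Lemma rep_repeat m n x : rep m (repeat x n) = repeat x (m * n).
Proof. induction m as [|m IH]; simpl; [reflexivity | rewrite IH, repeat_app; reflexivity]. Qed.

Lemma in_rep n x l : In x (rep n l) -> In x l.
Proof. induction n; simpl; [tauto | intros H; apply in_app_or in H; tauto]. Qed.

Lemma flat_map_rep {B} (f : A -> list B) n l : flat_map f (rep n l) = rep n (flat_map f l).
Proof. induction n as [|n IH]; simpl; [reflexivity | rewrite flat_map_app, IH; reflexivity]. Qed.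

Lemma rep_flat_map {B} (f : B -> list A) n (L : list B) :
  Permutation (rep n (flat_map f L)) (flat_map (fun y => rep n (f y)) L).
Proof.
  induction L as [|y L IH]; simpl; [rewrite rep_nil | rewrite rep_app, IH]; reflexivity.
Qed.

Lemma flat_map_repeat n l : Permutation (flat_map (fun x => repeat x n) l) (rep n l).
Proof. induction l as [|x l IH]; simpl; [rewrite rep_nil | rewrite rep_cons, IH]; reflexivity. Qed.

Lemma count_occ_rep (dec : forall x y : A, {x = y} + {x <> y}) n l x :
  count_occ dec (rep n l) x = n * count_occ dec l x.
Proof. induction n as [|n IH]; simpl; [reflexivity | rewrite count_occ_app, IH; reflexivity]. Qed.

Lemma rep_Permutation_inv (dec : forall x y : A, {x = y} + {x <> y}) n a b :
  0 < n -> Permutation (rep n a) (rep n b) -> Permutation a b.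
Proof.
  intros Hn H; rewrite (Permutation_count_occ dec) in *; intros x.
  specialize (H x); rewrite !count_occ_rep in H; nia.
Qed.

End Rep.

Lemma flat_map_map {A B C} (f : B -> list C) (g : A -> B) l :
  flat_map f (map g l) = flat_map (fun x => f (g x)) l.
Proof. induction l as [|x l IH]; simpl; [reflexivity | rewrite IH; reflexivity]. Qed.

Lemma Forall_or_Exists {A} (P Q : A -> Prop) l :
  Forall (fun x => P x \/ Q x) l -> Exists P l \/ Forall Q l.
Proof.
  induction 1 as [|x l [HP | HQ] _ [IH | IH]]; auto.
Qed.

Lemma Forall_exists_monotone {A} (Q : nat -> A -> Prop) l :
  (forall n m x, n <= m -> Q n x -> Q m x) ->
  Forall (fun x => exists n, Q n x) l -> exists n, Forall (Q n) l.
Proof.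
  intros Hmono; induction 1 as [|x l [n Hn] _ [m Hm]]; [exists 0; constructor |].
  exists (max n m); constructor.
  - apply (Hmono n); [lia | exact Hn].
  - eapply Forall_impl; [| exact Hm]; intros y; apply Hmono; lia.
Qed.

Lemma form_eq_dec (x y : form) : {x = y} + {x <> y}.
Proof. decide equality; apply Nat.eq_dec. Qed.

Fixpoint size (f : form) : nat :=
  match f with
  | Var _ => 1
  | Imp a b => S (size a + size b)
  | Box a => S (size a)
  end.

Fixpoint lsize (l : list form) : nat :=
  match l with
  | [] => 0
  | f :: l => size f + lsize l
  end.

#[export] Instance lsize_Permutation : Proper (@Permutation form ==> eq) lsize.
Proof. intros a b H; induction H; simpl; lia. Qed.

Lemma lsize_app a b : lsize (a ++ b) = lsize a + lsize b.
Proof. induction a as [|f a IH]; simpl; lia. Qed.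

Definition box_body (f : form) : list form := match f with Box a => [a] | _ => [] end.
Definition non_box (f : form) : list form := match f with Box _ => [] | _ => [f] end.

Lemma Permutation_non_box_box_body l :
  Permutation l (flat_map non_box l ++ map Box (flat_map box_body l)).
Proof. induction l as [|[] l IH]; simpl; try rewrite IH at 1; perm. Qed.

Lemma box_body_map_Box l : flat_map box_body (map Box l) = l.
Proof. induction l as [|f l IH]; simpl; [reflexivity | rewrite IH; reflexivity]. Qed.

Lemma non_box_map_Box l : flat_map non_box (map Box l) = [].
Proof. induction l; simpl; auto. Qed.

Lemma GKr_perm G D G' D' : GKr G D -> Permutation G G' -> Permutation D D' -> GKr G' D'.
Proof.
  intros H HG HD; destruct H.
  - apply (GK_id _ _ X); [rewrite <- HG | rewrite <- HD]; assumption.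
  - eapply GK_impL; [eassumption | rewrite <- HG | rewrite <- HD]; eassumption.
  - eapply GK_impR; [eassumption | rewrite <- HG | rewrite <- HD]; eassumption.
  - eapply GK_box; [eassumption .. | rewrite <- HG | rewrite <- HD]; eassumption.
Qed.

#[export] Instance GKr_Permutation :
  Proper (@Permutation form ==> @Permutation form ==> iff) GKr.
Proof. intros G G' HG D D' HD; split; intros H; eapply GKr_perm; eauto; symmetry; auto. Qed.

Lemma GKr_refl X : GKr X X.
Proof. apply (GK_id _ _ X); reflexivity. Qed.

Lemma GKr_app_refl X G D : GKr G D -> GKr (X ++ G) (D ++ X).
Proof.
  induction 1 as [G D Y HG HD | G D Gm Dl phi psi _ IH HG HD | G D Gm Dl phi psi _ IH HG HD
                 | k G D Dl Gm G0 ps Hk Hrep H0 _ Hps _ HG HD].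
  - apply (GK_id _ _ (X ++ Y)); [rewrite HG | rewrite HD]; perm.
  - apply (GK_impL _ _ (X ++ Gm) (Dl ++ X) phi psi);
      [eapply GKr_perm; [exact IH | |] | rewrite HG | rewrite HD]; perm.
  - apply (GK_impR _ _ (X ++ Gm) (Dl ++ X) phi psi);
      [eapply GKr_perm; [exact IH | |] | rewrite HG | rewrite HD]; perm.
  - apply (GK_box k _ _ (X ++ Dl) Gm G0 ps); auto; [rewrite HG | rewrite HD]; perm.
Qed.

Lemma GKr_impL phi psi G D : GKr (psi :: G) (phi :: D) -> GKr (Imp phi psi :: G) D.
Proof.
  intros H; apply (GK_impL _ _ G D phi psi); [| perm | reflexivity].
  eapply GKr_perm; [exact H | perm | reflexivity].
Qed.

Lemma GKr_impR phi psi G D : GKr (phi :: G) (psi :: D) -> GKr G (Imp phi psi :: D).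
Proof.
  intros H; apply (GK_impR _ _ G D phi psi); [| reflexivity | reflexivity].
  eapply GKr_perm; [exact H | perm | reflexivity].
Qed.

(* [step P G D]: [G => D] is the conclusion of a rule of GK(A_m)^r whose premises
   satisfy [P].  [GKr] is the least fixed point of [step], and [GKh n] below is
   derivability with a derivation of height at most [n]. *)
Section Steps.
Variable P : list form -> list form -> Prop.

Inductive nonbox_step (G D : list form) : Prop :=
| nb_id X : Permutation G X -> Permutation D X -> nonbox_step G D
| nb_impL Gm Dl phi psi :
    P (Gm ++ [psi]) (phi :: Dl) ->
    Permutation G (Gm ++ [Imp phi psi]) -> Permutation D Dl -> nonbox_step G D
| nb_impR Gm Dl phi psi :
    P (Gm ++ [phi]) (psi :: Dl) ->
    Permutation G Gm -> Permutation D (Imp phi psi :: Dl) -> nonbox_step G D.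

Inductive box_step (k : nat) (G D : list form) : Prop :=
| box_step_intro (Dl Gm G0 : list form) (ps : list (list form * form)) :
    0 < k ->
    Permutation (rep k Gm) (G0 ++ flat_map fst ps) ->
    P G0 [] ->
    Forall (fun p => P (fst p) (repeat (snd p) k)) ps ->
    Permutation G (Dl ++ map Box Gm) ->
    Permutation D (map Box (map snd ps) ++ Dl) -> box_step k G D.

Definition step (G D : list form) : Prop := nonbox_step G D \/ exists k, box_step k G D.

End Steps.

Lemma box_step_mono (P Q : list form -> list form -> Prop) k G D :
  (forall G D, P G D -> Q G D) -> box_step P k G D -> box_step Q k G D.
Proof.
  intros HPQ [Dl Gm G0 ps Hk Hrep H0 Hps HG HD].
  apply (box_step_intro Q k G D Dl Gm G0 ps); auto.
  eapply Forall_impl; [| exact Hps]; auto.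
Qed.

Lemma step_mono (P Q : list form -> list form -> Prop) G D :
  (forall G D, P G D -> Q G D) -> step P G D -> step Q G D.
Proof.
  intros HPQ [[] | [k Hk]].
  - left; eapply nb_id; eauto.
  - left; eapply nb_impL; eauto.
  - left; eapply nb_impR; eauto.
  - right; exists k; eapply box_step_mono; eauto.
Qed.

Lemma GKr_step G D : step GKr G D -> GKr G D.
Proof.
  intros [[] | [k [Dl Gm G0 ps Hk Hrep H0 Hps HG HD]]].
  - eapply GK_id; eauto.
  - eapply GK_impL; eauto.
  - eapply GK_impR; eauto.
  - rewrite flat_map_concat_map in Hrep; rewrite Forall_forall in Hps.
    eapply GK_box; eauto.
Qed.

Lemma box_step_GKr_intro k G D Dl Gm G0 ps :
  1 <= k -> Permutation (rep k Gm) (G0 ++ concat (map fst ps)) -> GKr G0 [] ->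
  (forall p, In p ps -> GKr (fst p) (repeat (snd p) k)) ->
  Permutation G (Dl ++ map Box Gm) -> Permutation D (map Box (map snd ps) ++ Dl) ->
  box_step GKr k G D.
Proof.
  intros Hk Hrep H0 Hps HG HD; rewrite <- flat_map_concat_map in Hrep.
  apply (box_step_intro GKr k G D Dl Gm G0 ps); [lia | | | apply Forall_forall | |]; assumption.
Qed.

Lemma GKr_inv G D : GKr G D -> step GKr G D.
Proof.
  intros [? ? X | ? ? Gm Dl phi psi | ? ? Gm Dl phi psi | k ? ? Dl Gm G0 ps].
  - left; eapply nb_id; eauto.
  - left; eapply nb_impL; eauto.
  - left; eapply nb_impR; eauto.
  - right; exists k; eapply box_step_GKr_intro; eauto.
Qed.

Lemma GKr_box_step k G D : box_step GKr k G D -> GKr G D.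
Proof. intros H; apply GKr_step; right; exists k; exact H. Qed.

Lemma box_step_ante_context (P : list form -> list form -> Prop) k f G' G D :
  box_step P k G' D -> Permutation G' (f :: G) -> (forall a, f <> Box a) ->
  exists D0, Permutation D (f :: D0) /\ box_step P k G D0.
Proof.
  intros [Dl Gm G0 ps Hk Hrep H0 Hps HG HD] HG' Hf.
  assert (Hin : In f Dl).
  { assert (Hin : In f (Dl ++ map Box Gm)) by (rewrite <- HG, HG'; left; reflexivity).
    apply in_app_or in Hin as [Hin | (a & Ha & _)%in_map_iff]; [exact Hin | now destruct (Hf a)]. }
  apply in_split in Hin as (u & v & ->).
  exists (map Box (map snd ps) ++ u ++ v); split; [rewrite HD; perm |].
  apply (box_step_intro P k G _ (u ++ v) Gm G0 ps Hk Hrep H0 Hps); [| reflexivity].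
  apply (Permutation_cons_inv (a := f)); rewrite <- HG', HG; perm.
Qed.

Lemma box_step_succ_context (P : list form -> list form -> Prop) k f G D' D :
  box_step P k G D' -> Permutation D' (f :: D) -> (forall a, f <> Box a) ->
  exists G0, Permutation G (f :: G0) /\ box_step P k G0 D.
Proof.
  intros [Dl Gm G0 ps Hk Hrep H0 Hps HG HD] HD' Hf.
  assert (Hin : In f Dl).
  { assert (Hin : In f (map Box (map snd ps) ++ Dl)) by (rewrite <- HD, HD'; left; reflexivity).
    apply in_app_or in Hin as [(a & Ha & _)%in_map_iff | Hin]; [now destruct (Hf a) | exact Hin]. }
  apply in_split in Hin as (u & v & ->).
  exists ((u ++ v) ++ map Box Gm); split; [rewrite HG; perm |].
  apply (box_step_intro P k _ D (u ++ v) Gm G0 ps Hk Hrep H0 Hps); [reflexivity |].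
  apply (Permutation_cons_inv (a := f)); rewrite <- HD', HD; perm.
Qed.

Fixpoint GKh (n : nat) (G D : list form) : Prop :=
  match n with
  | 0 => False
  | S n => step (GKh n) G D
  end.

Lemma GKh_mono n m G D : n <= m -> GKh n G D -> GKh m G D.
Proof.
  revert m G D; induction n as [|n IH]; intros [|m] G D Hnm H; simpl in *;
    try lia; try contradiction.
  eapply step_mono; [| exact H]; intros; apply (IH m); [lia | assumption].
Qed.

Lemma GKr_GKh G D : GKr G D -> exists n, GKh n G D.
Proof.
  induction 1 as [G D X HG HD | G D Gm Dl phi psi _ [n IH] HG HD | G D Gm Dl phi psi _ [n IH] HG HD
                 | k G D Dl Gm G0 ps Hk Hrep _ [n0 IH0] _ IHps HG HD].
  - exists 1; left; eapply nb_id; eauto.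
  - exists (S n); left; eapply nb_impL; eauto.
  - exists (S n); left; eapply nb_impR; eauto.
  - destruct (Forall_exists_monotone (fun n p => GKh n (fst p) (repeat (snd p) k)) ps) as [n Hn].
    { intros; eapply GKh_mono; eauto. }
    { apply Forall_forall; exact IHps. }
    exists (S (max n0 n)); right; exists k; rewrite <- flat_map_concat_map in Hrep.
    apply (box_step_intro _ k G D Dl Gm G0 ps); [lia | exact Hrep | | | exact HG | exact HD].
    + apply (GKh_mono n0); [lia | exact IH0].
    + eapply Forall_impl; [| exact Hn]; intros p; apply GKh_mono; lia.
Qed.

(** * Box rules with premises closed under mix *)

Definition mix_of (Q : list form -> list form -> Prop) (G D : list form) : Prop :=
  exists L, Forall (fun s => Q (fst s) (snd s)) L /\
    Permutation G (flat_map fst L) /\ Permutation D (flat_map snd L).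

Lemma mix_of_intro Q G D : Q G D -> mix_of Q G D.
Proof. exists [(G, D)]; simpl; rewrite !app_nil_r; auto. Qed.

Lemma mix_of_nil Q : mix_of Q [] [].
Proof. exists []; auto. Qed.

Lemma mix_of_app Q G D G' D' : mix_of Q G D -> mix_of Q G' D' -> mix_of Q (G ++ G') (D ++ D').
Proof.
  intros (L & HL & HG & HD) (L' & HL' & HG' & HD'); exists (L ++ L').
  rewrite !flat_map_app, HG, HD, HG', HD'; split; [apply Forall_app |]; auto.
Qed.

Section MixClosed.
Variable P : list form -> list form -> Prop.
Hypothesis P_perm : forall G D G' D', P G D -> Permutation G G' -> Permutation D D' -> P G' D'.
Hypothesis P_nil : P [] [].
Hypothesis P_app : forall G D G' D', P G D -> P G' D' -> P (G ++ G') (D ++ D').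

Lemma mix_closed_flat_map {A} (f g : A -> list form) l :
  Forall (fun x => P (f x) (g x)) l -> P (flat_map f l) (flat_map g l).
Proof. induction 1; simpl; auto. Qed.

Lemma mix_closed_rep n G D : P G D -> P (rep n G) (rep n D).
Proof. intros H; induction n; simpl; auto. Qed.

Lemma box_step_scale c k G D : 0 < c -> box_step P k G D -> box_step P (c * k) G D.
Proof.
  intros Hc [Dl Gm G0 ps Hk Hrep H0 Hps HG HD].
  apply (box_step_intro P (c * k) G D Dl Gm (rep c G0) (map (fun p => (rep c (fst p), snd p)) ps)).
  - nia.
  - rewrite <- rep_rep, Hrep, rep_app, rep_flat_map, flat_map_map; reflexivity.
  - rewrite <- (rep_nil c); apply mix_closed_rep; exact H0.
  - apply Forall_map; eapply Forall_impl; [| exact Hps]; intros p Hp; simpl.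
    rewrite <- rep_repeat; apply mix_closed_rep; exact Hp.
  - exact HG.
  - rewrite HD, !map_map; reflexivity.
Qed.

Lemma box_step_app k G D G' D' :
  box_step P k G D -> box_step P k G' D' -> box_step P k (G ++ G') (D ++ D').
Proof.
  intros [Dl Gm G0 ps Hk Hrep H0 Hps HG HD] [Dl' Gm' G0' ps' _ Hrep' H0' Hps' HG' HD'].
  apply (box_step_intro P k _ _ (Dl ++ Dl') (Gm ++ Gm') (G0 ++ G0') (ps ++ ps')).
  - exact Hk.
  - rewrite rep_app, Hrep, Hrep', flat_map_app; perm.
  - exact (P_app _ _ _ _ H0 H0').
  - apply Forall_app; auto.
  - rewrite HG, HG', map_app; perm.
  - rewrite HD, HD', !map_app; perm.
Qed.

Lemma box_step_flat_map L :
  Forall (fun s => exists k, box_step P k (fst s) (snd s)) L ->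
  exists k, box_step P k (flat_map fst L) (flat_map snd L).
Proof.
  induction 1 as [| s L [k Hs] _ [k' HL]].
  - exists 1; apply (box_step_intro P 1 [] [] [] [] [] []); simpl; auto.
  - assert (0 < k) by (destruct Hs; assumption).
    assert (0 < k') by (destruct HL; assumption).
    exists (k' * k); simpl; apply box_step_app.
    + apply box_step_scale; assumption.
    + rewrite Nat.mul_comm; apply box_step_scale; assumption.
Qed.

Lemma box_premises_merge n k Y : forall ps,
  Permutation (map snd ps) (rep n Y) ->
  Forall (fun p => P (fst p) (repeat (snd p) k)) ps ->
  exists ps', map snd ps' = Y /\ Permutation (flat_map fst ps') (flat_map fst ps) /\
    Forall (fun p => P (fst p) (repeat (snd p) (n * k))) ps'.
Proof.
  induction Y as [|y Y IH]; intros ps Hsnd Hps.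
  - rewrite rep_nil in Hsnd; apply Permutation_sym, Permutation_nil, map_eq_nil in Hsnd; subst.
    exists []; repeat constructor.
  - rewrite rep_cons in Hsnd; symmetry in Hsnd.
    destruct (Permutation_map_inv _ _ Hsnd) as (ps'' & Heq & Hperm).
    destruct (map_eq_app _ _ _ _ (eq_sym Heq)) as (ps1 & ps0 & -> & Hsnd1 & Hsnd0).
    rewrite Hperm, Forall_app in Hps; destruct Hps as [Hps1 Hps0].
    destruct (IH ps0) as (ps0' & Hsnd0' & Hfst0 & Hps0');
      [rewrite Hsnd0; reflexivity | exact Hps0 |].
    exists ((flat_map fst ps1, y) :: ps0'); split; [simpl; congruence |]; split.
    + rewrite Hperm, flat_map_app; simpl; rewrite Hfst0; reflexivity.
    + constructor; [simpl | exact Hps0'].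
      apply (P_perm _ _ _ _ (mix_closed_flat_map fst (fun p => repeat (snd p) k) ps1 Hps1));
        [reflexivity |].
      replace (flat_map (fun p => repeat (snd p) k) ps1)
        with (flat_map (fun c => repeat c k) (map snd ps1)) by apply flat_map_map.
      rewrite Hsnd1, flat_map_repeat, rep_repeat, Nat.mul_comm; reflexivity.
Qed.

Lemma box_step_rep_inv n k G D :
  (forall X, P X X) -> 0 < n -> box_step P k (rep n G) (rep n D) -> box_step P (n * k) G D.
Proof.
  intros P_refl Hn [Dl Gm G0 ps Hk Hrep H0 Hps HG HD].
  (* A boxed formula [c] of the context [Dl] contributes the identity premise [k[c] => k[c]]. *)
  destruct (box_premises_merge n k (flat_map box_body D)
              (ps ++ map (fun c => (repeat c k, c)) (flat_map box_body Dl)))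
    as (ps' & Hsnd' & Hfst' & Hps').
  { rewrite map_app, map_map, map_id, <- flat_map_rep, HD, flat_map_app, box_body_map_Box.
    reflexivity. }
  { apply Forall_app; split; [exact Hps |].
    apply Forall_map, Forall_forall; intros; apply P_refl. }
  assert (Hnb : Permutation (flat_map non_box D) (flat_map non_box G)).
  { apply (rep_Permutation_inv form_eq_dec n); [exact Hn |].
    rewrite <- !flat_map_rep, HG, HD, !flat_map_app, !non_box_map_Box; perm. }
  apply (box_step_intro P (n * k) G D (flat_map non_box G) (flat_map box_body G) G0 ps').
  - nia.
  - rewrite Nat.mul_comm, <- rep_rep, <- flat_map_rep, HG, flat_map_app, box_body_map_Box,
      rep_app, Hrep, Hfst', !flat_map_app, flat_map_map; simpl.
    rewrite flat_map_repeat; perm.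
  - exact H0.
  - exact Hps'.
  - apply Permutation_non_box_box_body.
  - rewrite Hsnd', (Permutation_non_box_box_body D) at 1; rewrite Hnb; perm.
Qed.

End MixClosed.

Lemma GKr_flat_map_box_steps (Q : list form -> list form -> Prop) L :
  (forall G D, mix_of Q G D -> GKr G D) ->
  Forall (fun s => exists k, box_step Q k (fst s) (snd s)) L ->
  GKr (flat_map fst L) (flat_map snd L).
Proof.
  intros HQ HL.
  destruct (box_step_flat_map (mix_of Q) (mix_of_nil _) (mix_of_app _) L) as [k Hk].
  { eapply Forall_impl; [| exact HL]; intros s [k Hs]; exists k.
    eapply box_step_mono; [apply mix_of_intro | exact Hs]. }
  apply (GKr_box_step k); eapply box_step_mono; [exact HQ | exact Hk].
Qed.

(** * Mix *)

Definition seq_weight (s : list form * list form) : nat := S (lsize (fst s) + lsize (snd s)).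
Definition weight (L : list (list form * list form)) : nat := list_sum (map seq_weight L).

#[export] Instance weight_Permutation :
  Proper (@Permutation (list form * list form) ==> eq) weight.
Proof. intros L L' H; unfold weight; rewrite H; reflexivity. Qed.

Lemma weight_cons s L : weight (s :: L) = seq_weight s + weight L.
Proof. reflexivity. Qed.

Lemma GKh_mix_succ n :
  (forall L, Forall (fun s => GKh n (fst s) (snd s)) L -> GKr (flat_map fst L) (flat_map snd L)) ->
  forall L, Forall (fun s => GKh (S n) (fst s) (snd s)) L -> GKr (flat_map fst L) (flat_map snd L).
Proof.
  intros IHn L; remember (weight L) as w eqn:Hw; revert L Hw.
  induction w as [w IH] using lt_wf_ind; intros L Hw HL.
  destruct (Forall_or_Exists (fun s => nonbox_step (GKh n) (fst s) (snd s))
              (fun s => exists k, box_step (GKh n) k (fst s) (snd s)) L HL) as [Hex | Hbox].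
  2:{ apply (GKr_flat_map_box_steps (GKh n)); [| exact Hbox].
      intros G D (L' & HL' & HG & HD); rewrite HG, HD; exact (IHn L' HL'). }
  apply Exists_exists in Hex as ([G D] & Hin & Hstep); simpl in Hstep.
  apply in_split in Hin as (L1 & L2 & ->).
  rewrite <- Permutation_middle in HL, Hw |- *.
  inversion_clear HL as [| ? ? _ HL'].
  rewrite weight_cons in Hw; simpl.
  assert (IHhead : forall s, GKh n (fst s) (snd s) ->
            lsize (fst s) + lsize (snd s) < lsize G + lsize D ->
            GKr (fst s ++ flat_map fst (L1 ++ L2)) (snd s ++ flat_map snd (L1 ++ L2))).
  { intros s Hs Hlt.
    apply (IH (weight (s :: L1 ++ L2))
              ltac:(rewrite weight_cons; unfold seq_weight in *; simpl in *; lia) _ eq_refl).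
    constructor; [eapply GKh_mono; [| exact Hs]; lia | exact HL']. }
  destruct Hstep as [X HG HD | Gm Dl phi psi Hprem HG HD | Gm Dl phi psi Hprem HG HD].
  - specialize (IH (weight (L1 ++ L2)) ltac:(unfold seq_weight in Hw; lia) _ eq_refl HL').
    apply (GKr_app_refl X) in IH; rewrite HG, HD; eapply GKr_perm; [exact IH | perm | perm].
  - specialize (IHhead (Gm ++ [psi], phi :: Dl) Hprem
                  ltac:(simpl; rewrite HG, HD, !lsize_app; simpl; lia)).
    rewrite HG, HD.
    eapply GKr_perm; [apply (GKr_impL phi psi (Gm ++ flat_map fst (L1 ++ L2))) | perm | reflexivity].
    eapply GKr_perm; [exact IHhead | perm | perm].
  - specialize (IHhead (Gm ++ [phi], psi :: Dl) Hprem
                  ltac:(simpl; rewrite HG, HD, !lsize_app; simpl; lia)).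
    rewrite HG, HD.
    eapply GKr_perm; [apply (GKr_impR phi psi _ (Dl ++ flat_map snd (L1 ++ L2))) | reflexivity | perm].
    eapply GKr_perm; [exact IHhead | perm | perm].
Qed.

Lemma GKh_mix n L :
  Forall (fun s => GKh n (fst s) (snd s)) L -> GKr (flat_map fst L) (flat_map snd L).
Proof.
  revert L; induction n as [|n IHn]; intros L HL.
  - destruct HL as [| s L Hs _]; [apply (GKr_refl []) | contradiction].
  - exact (GKh_mix_succ n IHn L HL).
Qed.

Theorem GKr_app G D G' D' : GKr G D -> GKr G' D' -> GKr (G ++ G') (D ++ D').
Proof.
  intros [n H]%GKr_GKh [n' H']%GKr_GKh.
  assert (Hmix := GKh_mix (max n n') [(G, D); (G', D')]); simpl in Hmix; rewrite !app_nil_r in Hmix.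
  apply Hmix; constructor; [| constructor; [| constructor]];
    (eapply GKh_mono; [| eassumption]; lia).
Qed.

(** * Invertibility and (sc_n) *)

Lemma Permutation_cons_cases {A} (x y : A) l l' :
  Permutation (x :: l) (y :: l') ->
  (x = y /\ Permutation l l') \/ exists l0, Permutation l (y :: l0) /\ Permutation l' (x :: l0).
Proof.
  intros H; assert (Hy : In y (x :: l)) by (rewrite H; left; reflexivity).
  destruct Hy as [-> | (u & v & ->)%in_split].
  - left; split; [reflexivity | exact (Permutation_cons_inv H)].
  - right; exists (u ++ v); split; [perm |].
    apply (Permutation_cons_inv (a := y)); rewrite <- H; perm.
Qed.

Lemma GKr_impL_inv_id phi psi : GKr [psi] [Imp phi psi; phi].
Proof. apply GKr_impR, (GK_id _ _ [phi; psi]); perm. Qed.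

Lemma GKr_impR_inv_id phi psi : GKr [Imp phi psi; phi] [psi].
Proof. apply GKr_impL, (GK_id _ _ [phi; psi]); perm. Qed.

Lemma GKr_impL_inv phi psi G D : GKr (Imp phi psi :: G) D -> GKr (psi :: G) (phi :: D).
Proof.
  intros H; remember (Imp phi psi :: G) as G' eqn:HG'.
  assert (Hperm : Permutation G' (Imp phi psi :: G)) by (rewrite HG'; reflexivity); clear HG'.
  revert G Hperm.
  induction H as [G' D X HG HD | G' D Gm Dl a b Hprem IH HG HD | G' D Gm Dl a b Hprem IH HG HD
                 | k G' D Dl Gm G0 ps Hk Hrep H0 _ Hps _ HG HD]; intros G HG'.
  - assert (Hax := GKr_app_refl G _ _ (GKr_impL_inv_id phi psi)).
    rewrite HD, <- HG, HG'; eapply GKr_perm; [exact Hax | perm | perm].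
  - rewrite HG in HG'.
    destruct (Permutation_cons_cases (Imp a b) (Imp phi psi) Gm G)
      as [[[= -> ->] Hperm] | (l0 & HGm & HG0)]; [rewrite <- HG'; perm | |].
    + rewrite HD, <- Hperm; eapply GKr_perm; [exact Hprem | perm | reflexivity].
    + specialize (IH (l0 ++ [b]) ltac:(rewrite HGm; perm)).
      rewrite HG0, HD.
      eapply GKr_perm; [apply (GKr_impL a b (psi :: l0) (phi :: Dl)) | perm | reflexivity].
      eapply GKr_perm; [exact IH | perm | perm].
  - specialize (IH (G ++ [a]) ltac:(rewrite <- HG, HG'; perm)).
    rewrite HD; eapply GKr_perm; [apply (GKr_impR a b (psi :: G) (phi :: Dl)) | reflexivity | perm].
    eapply GKr_perm; [exact IH | perm | perm].
  - destruct (box_step_ante_context GKr k (Imp phi psi) G' G D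
                (box_step_GKr_intro k G' D Dl Gm G0 ps Hk Hrep H0 Hps HG HD) HG')
      as (D0 & HD0 & Hbox); [discriminate |].
    assert (Hmix := GKr_app _ _ _ _ (GKr_box_step k G D0 Hbox) (GKr_impL_inv_id phi psi)).
    rewrite HD0; eapply GKr_perm; [exact Hmix | perm | perm].
Qed.

Lemma GKr_impR_inv phi psi G D : GKr G (Imp phi psi :: D) -> GKr (phi :: G) (psi :: D).
Proof.
  intros H; remember (Imp phi psi :: D) as D' eqn:HD'.
  assert (Hperm : Permutation D' (Imp phi psi :: D)) by (rewrite HD'; reflexivity); clear HD'.
  revert D Hperm.
  induction H as [G D' X HG HD | G D' Gm Dl a b Hprem IH HG HD | G D' Gm Dl a b Hprem IH HG HD
                 | k G D' Dl Gm G0 ps Hk Hrep H0 _ Hps _ HG HD]; intros D HD'.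
  - assert (Hax := GKr_app_refl D _ _ (GKr_impR_inv_id phi psi)).
    rewrite HG, <- HD, HD'; eapply GKr_perm; [exact Hax | perm | perm].
  - specialize (IH (a :: D) ltac:(rewrite <- HD, HD'; perm)).
    rewrite HG; eapply GKr_perm; [apply (GKr_impL a b (phi :: Gm) (psi :: D)) | perm | reflexivity].
    eapply GKr_perm; [exact IH | perm | perm].
  - rewrite HD in HD'.
    destruct (Permutation_cons_cases (Imp a b) (Imp phi psi) Dl D HD')
      as [[[= -> ->] Hperm] | (l0 & HDl & HD0)].
    + rewrite HG, <- Hperm; eapply GKr_perm; [exact Hprem | perm | reflexivity].
    + specialize (IH (b :: l0) ltac:(rewrite HDl; perm)).
      rewrite HG, HD0.
      eapply GKr_perm; [apply (GKr_impR a b (phi :: Gm) (psi :: l0)) | reflexivity | perm].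
      eapply GKr_perm; [exact IH | perm | perm].
  - destruct (box_step_succ_context GKr k (Imp phi psi) G D' D
                (box_step_GKr_intro k G D' Dl Gm G0 ps Hk Hrep H0 Hps HG HD) HD')
      as (G1 & HG1 & Hbox); [discriminate |].
    assert (Hmix := GKr_app _ _ _ _ (GKr_box_step k G1 D Hbox) (GKr_impR_inv_id phi psi)).
    rewrite HG1; eapply GKr_perm; [exact Hmix | perm | perm].
Qed.

Lemma GKr_impL_inv_repeat phi psi j G D :
  GKr (repeat (Imp phi psi) j ++ G) D -> GKr (repeat psi j ++ G) (repeat phi j ++ D).
Proof.
  revert G D; induction j as [|j IH]; intros G D H; simpl in *; [exact H |].
  apply GKr_impL_inv in H.
  eapply GKr_perm; [apply (IH (psi :: G) (phi :: D)) | perm | perm].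
  eapply GKr_perm; [exact H | perm | reflexivity].
Qed.

Lemma GKr_impR_inv_repeat phi psi j G D :
  GKr G (repeat (Imp phi psi) j ++ D) -> GKr (repeat phi j ++ G) (repeat psi j ++ D).
Proof.
  revert G D; induction j as [|j IH]; intros G D H; simpl in *; [exact H |].
  apply GKr_impR_inv in H.
  eapply GKr_perm; [apply (IH (phi :: G) (psi :: D)) | perm | perm].
  eapply GKr_perm; [exact H | reflexivity | perm].
Qed.

Lemma In_Imp_dec (l : list form) : (exists a b, In (Imp a b) l) \/ (forall a b, ~ In (Imp a b) l).
Proof.
  induction l as [|f l [(a & b & H) | H]].
  - right; intros a b [].
  - left; exists a, b; right; exact H.
  - destruct f as [| a b |]; [right | left; exists a, b; left; reflexivity | right];
      intros c d [Heq | Hin]; [discriminate | exact (H c d Hin) | discriminate | exact (H c d Hin)].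
Qed.

Lemma In_Permutation_cons {A} (x : A) l : In x l -> exists l', Permutation l (x :: l').
Proof. intros (u & v & ->)%in_split; exists (u ++ v); perm. Qed.

Lemma GKr_rep_inv_noimp n G D :
  0 < n -> (forall a b, ~ In (Imp a b) G) -> (forall a b, ~ In (Imp a b) D) ->
  GKr (rep n G) (rep n D) -> GKr G D.
Proof.
  intros Hn HG HD [[X HGX HDX | Gm Dl a b _ HGm _ | Gm Dl a b _ _ HDl] | [k Hbox]]%GKr_inv.
  - apply (GK_id _ _ D); [| reflexivity].
    apply (rep_Permutation_inv form_eq_dec n); [exact Hn |]; rewrite HGX, HDX; reflexivity.
  - exfalso; apply (HG a b), (in_rep n); rewrite HGm; apply in_or_app; right; left; reflexivity.
  - exfalso; apply (HD a b), (in_rep n); rewrite HDl; left; reflexivity.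
  - apply (GKr_box_step (n * k)); apply box_step_rep_inv;
      [exact GKr_perm | exact (GKr_refl []) | exact GKr_app | exact GKr_refl | exact Hn |
       exact Hbox].
Qed.

Theorem GKr_rep_inv n G D : 0 < n -> GKr (rep n G) (rep n D) -> GKr G D.
Proof.
  intros Hn; remember (lsize G + lsize D) as w eqn:Hw; revert G D Hw.
  induction w as [w IH] using lt_wf_ind; intros G D Hw H.
  destruct (In_Imp_dec G) as [(a & b & (G' & HG')%In_Permutation_cons) | HG].
  { rewrite HG' in H, Hw |- *; rewrite rep_cons in H; simpl in Hw.
    apply GKr_impL, (IH (lsize (b :: G') + lsize (a :: D))); [simpl; lia | reflexivity |].
    rewrite !rep_cons; apply GKr_impL_inv_repeat, H. }
  destruct (In_Imp_dec D) as [(a & b & (D' & HD')%In_Permutation_cons) | HD].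
  { rewrite HD' in H, Hw |- *; rewrite rep_cons in H; simpl in Hw.
    apply GKr_impR, (IH (lsize (a :: G) + lsize (b :: D'))); [simpl; lia | reflexivity |].
    rewrite !rep_cons; apply GKr_impR_inv_repeat, H. }
  exact (GKr_rep_inv_noimp n G D Hn HG HD H).
Qed.

Theorem lemma4p5 :
  (forall G D P S : list form, GKr G D -> GKr P S -> GKr (G ++ P) (S ++ D)) /\
  (forall n : nat, 2 <= n ->
     forall G D : list form, GKr (rep n G) (rep n D) -> GKr G D).
Proof.
  split.
  - intros G D P S HGD HPS; rewrite (Permutation_app_comm S D); exact (GKr_app _ _ _ _ HGD HPS).
  - intros n Hn G D; apply GKr_rep_inv; lia.
Qed.
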